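(* Let $s\in\{1/2,1,3/2,\dots\}$, $N=2s$, and let $C,D,E$ be linear operators on $\mathcal{H}_s$ with $C=DE$. Let $p_C,p_D,p_E$ be their Majorana polynomials. Then \[ p_C(z)=(N!)^{-1}\,p_D(z_a,\partial_a)\,p_E(z_a,z^a),\qquad p_C(z)=(N!)^{-1}\,p_E(\partial^a,z^a)\,p_D(z_a,z^a). \] Here $p_D(z_a,\partial_a)$ denotes the differential operator obtained from $p_D(z_1,z_2,z^1,z^2)$ by replacing each $z^a$ by $\partial_a=\partial/\partial z_a$, and $p_E(\partial^a,z^a)$ the one obtained from $p_E$ by replacing each $z_a$ by $\partial^a=\partial/\partial z^a$; in each monomial the derivatives are placed to the right of the multiplication factors, so that they act only on the polynomial to the right.
   Context: $\mathcal{H}_s$ is the spin-$s$ Hilbert space with orthonormal $S_z$-eigenbasis $\{|s,m\rangle\}_{m=-s}^{s}$. Treat $z_1,z_2,z^1,z^2$ as four independent complex variables (formally $z^a=\overline{z_a}$), with $\partial_a z_b=\partial^a z^b=\delta_{ab}$, $\partial_a z^b=\partial^a z_b=0$. Define the bra $\langle -\mathbf n_B|=\sum_{m=-s}^{s}(-1)^{s-m}\sqrt{\binom{2s}{s-m}}\,z_1^{s+m}z_2^{s-m}\langle s,m|$ and the ket $|-\mathbf n_B\rangle=\sum_{m=-s}^{s}(-1)^{s-m}\sqrt{\binom{2s}{s-m}}\,(z^1)^{s+m}(z^2)^{s-m}|s,m\rangle$. The Majorana polynomial of an operator $C$ on $\mathcal{H}_s$ is $p_C(z)=\langle -\mathbf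 n_B|C|-\mathbf n_B\rangle$, a polynomial in $(z_1,z_2,z^1,z^2)$ each of whose monomials $z_1^\alpha z_2^\beta(z^1)^\gamma(z^2)^\delta$ has $\alpha+\beta=\gamma+\delta=N$. Repeated indices $a\in\{1,2\}$ are summed. *)

From HB Require Import structures.
From mathcomp Require Import all_boot all_order all_algebra.
From mathcomp Require Import mpoly.
Set Implicit Arguments. Unset Strict Implicit. Unset Printing Implicit Defensive.
Import Order.TTheory GRing.Theory Num.Theory.
Local Open Scope ring_scope.

(* Spin s = N/2; H_s has basis |s,m>, m = -s..s, indexed here by
   k : 'I_(N.+1) with k = s + m (so s - m = N - k).  Operators on H_s are
   (N+1)x(N+1) matrices A with A j k = <j|A|k>.
   Variables of {mpoly R[4]}: 'X_0 = z_1, 'X_1 = z_2, 'X_2 = z^1, 'X_3 = z^2. *)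

Section Majorana.
Variable R : numClosedFieldType.
Variable N : nat.

Definition vz1 : 'I_4 := inord 0.
Definition vz2 : 'I_4 := inord 1.
Definition vZ1 : 'I_4 := inord 2.
Definition vZ2 : 'I_4 := inord 3.

(* (-1)^(s-m) sqrt(binom(2s, s-m)) with s-m = N-k *)
Definition mcoef (k : 'I_N.+1) : R :=
  (-1) ^+ (N - k) * sqrtC ('C(N, N - k))%:R.

(* <-n_B| coefficient of <k| *)
Definition bra_coef (k : 'I_N.+1) : {mpoly R[4]} :=
  mcoef k *: ('X_vz1 ^+ k * 'X_vz2 ^+ (N - k)).
(* |-n_B> coefficient of |k> *)
Definition ket_coef (k : 'I_N.+1) : {mpoly R[4]} :=
  mcoef k *: ('X_vZ1 ^+ k * 'X_vZ2 ^+ (N - k)).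

(* p_A = <-n_B| A |-n_B> *)
Definition majorana (A : 'M[R]_N.+1) : {mpoly R[4]} :=
  \sum_(j < N.+1) \sum_(k < N.+1) (bra_coef j * (A j k *: ket_coef k)).

Definition dern (i : 'I_4) (n : nat) (f : {mpoly R[4]}) : {mpoly R[4]} :=
  iter n (mderiv i) f.

Definition op_zd (p f : {mpoly R[4]}) : {mpoly R[4]} :=
  \sum_(m <- msupp p)
     p@_m *: ('X_vz1 ^+ (m vz1) * 'X_vz2 ^+ (m vz2)
               * dern vz1 (m vZ1) (dern vz2 (m vZ2) f)).

Definition op_dz (p f : {mpoly R[4]}) : {mpoly R[4]} :=
  \sum_(m <- msupp p)
     p@_m *: ('X_vZ1 ^+ (m vZ1) * 'X_vZ2 ^+ (m vZ2)
               * dern vZ1 (m vz1) (dern vZ2 (m vz2) f)).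

End Majorana.

(* Write z^(j) = z_1^j z_2^(N-j), zb^(k) = (z^1)^k (z^2)^(N-k) and w_k^2 = binom(N, k).
   The Majorana polynomial of M is the symbol sum_(j,k) w_j M_jk w_k z^(j) zb^(k).
   Replacing z^a by d_a turns zb^(k) into d_1^k d_2^(N-k), and the apolar pairing
   d_1^k d_2^(N-k) z^(l) = [k = l] k! (N-k)! makes p_D(z, d) p_E collapse to
   sum_k w_k^2 k! (N-k)! D_jk E_km = N! (DE)_jm.  Exchanging the roles of z_a and
   z^a transposes the symbol, so the second identity is the first one applied to
   C^T = E^T D^T. *)

From HB Require Import structures.
From mathcomp Require Import all_boot all_order all_algebra.
From mathcomp Require Import mpoly ssrcomplements.
From mathcomp Require Import zify ring.
Set Implicit Arguments. Unset Strict Implicit. Unset Printing Implicit Defensive.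
Import Order.TTheory GRing.Theory Num.Theory.
Local Open Scope ring_scope.

Section LinearExtension.
Variables (R : comNzRingType) (n : nat) (V : lmodType R).
Implicit Types (p : {mpoly R[n]}) (T : 'X_{1..n} -> V).

Definition linext T p : V := \sum_(m <- msupp p) p@_m *: T m.

Lemma linextE T p k : (msize p <= k)%N ->
  linext T p = \sum_(m : 'X_{1..n < k}) p@_m *: T m.
Proof.
move=> le_pk; rewrite /linext (big_mksub 'X_{1..n < k}) ?msupp_uniq //=.
  by rewrite big_rmcond //= => m /memN_msupp_eq0 ->; rewrite scale0r.
by move=> m /msize_mdeg_lt /leq_trans; apply.
Qed.

Lemma linext_is_linear T : linear (linext T).
Proof.
move=> c p q; pose k := (msize p + msize q + msize (c *: p + q))%N.
have [le_pk le_qk le_rk] :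
  [/\ msize p <= k, msize q <= k & msize (c *: p + q) <= k]%N by split; lia.
rewrite (linextE _ le_pk) (linextE _ le_qk) (linextE _ le_rk).
rewrite scaler_sumr -big_split; apply: eq_bigr => m _.
by rewrite mcoeffD mcoeffZ scalerDl scalerA.
Qed.

HB.instance Definition _ T :=
  GRing.isLinear.Build R {mpoly R[n]} V _ (linext T) (linext_is_linear T).

Lemma linextX T m : linext T 'X_[m] = T m.
Proof. by rewrite /linext msuppX big_seq1 mcoeffX eqxx scale1r. Qed.

End LinearExtension.

Section BinaryMonomials.
Variables (R : comNzRingType) (n N : nat).
Implicit Types (i : 'I_n) (j k l : nat) (m : 'X_{1..n}).

Definition mbin (i1 i2 : 'I_n) j : 'X_{1..n} := (U_(i1) *+ j + U_(i2) *+ (N - j))%MM.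

Lemma mbinE (i1 i2 : 'I_n) j i :
  mbin i1 i2 j i = ((i1 == i) * j + (i2 == i) * (N - j))%N.
Proof. by rewrite mnmDE !mulmnE !mnm1E. Qed.

Lemma mbin_l (i1 i2 : 'I_n) j : i1 != i2 -> mbin i1 i2 j i1 = j.
Proof. by move=> ne12; rewrite mbinE eqxx eq_sym (negbTE ne12) mul1n addn0. Qed.

Lemma mbin_r (i1 i2 : 'I_n) j : i1 != i2 -> mbin i1 i2 j i2 = (N - j)%N.
Proof. by move=> ne12; rewrite mbinE eqxx (negbTE ne12) mul1n. Qed.

Lemma mbin_out (i1 i2 : 'I_n) j i : i1 != i -> i2 != i -> mbin i1 i2 j i = 0%N.
Proof. by move=> /negbTE ne1 /negbTE ne2; rewrite mbinE ne1 ne2. Qed.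

Lemma mpolyX_mbin (i1 i2 : 'I_n) j :
  'X_i1 ^+ j * 'X_i2 ^+ (N - j) = 'X_[mbin i1 i2 j] :> {mpoly R[n]}.
Proof. by rewrite !mpolyXn -mpolyXD. Qed.

Lemma ffact_apolar l k : (l <= N)%N -> (k <= N)%N ->
  ((N - l) ^_ (N - k) * l ^_ k)%N = ((l == k) * (k`! * (N - k)`!))%N.
Proof.
move=> le_lN le_kN; case: ltngtP => [lt_lk|lt_kl|->].
- by rewrite (@ffact_small l) ?muln0.
- by rewrite (@ffact_small (N - l)) ?mul0n // ltn_sub2l // (leq_trans lt_kl).
- by rewrite !ffactnn mulnC mul1n.
Qed.

Lemma mderivm_mbin (i1 i2 : 'I_n) l k m : i1 != i2 -> m i1 = 0%N -> m i2 = 0%N ->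
  (l <= N)%N -> (k <= N)%N ->
  mderivm (mbin i1 i2 k) 'X_[mbin i1 i2 l + m] =
    ((l == k) * (k`! * (N - k)`!))%:R *: ('X_[m] : {mpoly R[n]}).
Proof.
move=> ne12 m1 m2 le_lN le_kN; have ne21 : i2 != i1 by rewrite eq_sym.
rewrite mderivmDm !mderivnX mderivmZ mderivnX scalerA -natrM.
rewrite mnmBE !mnmDE !mulmnE !mnm1E !eqxx (negbTE ne12) (negbTE ne21) m1 m2.
rewrite !mul1n !mul0n !addn0 add0n subn0 mulnC ffact_apolar //.
case: eqP => [<-|_]; last by rewrite mul0n !scale0r.
congr (_ *: 'X_[_]); apply/mnmP => i.
by rewrite !(mnmBE, mnmDE, mulmnE, mnm1E); lia.
Qed.

End BinaryMonomials.

Section MatrixSymbols.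
Variables (R : comNzRingType) (n N : nat).

Definition mxsymbol (w : 'I_N.+1 -> R) (a1 a2 b1 b2 : 'I_n) (M : 'M[R]_N.+1) :
    {mpoly R[n]} :=
  \sum_(j < N.+1) \sum_(k < N.+1)
     (w j * M j k * w k) *: 'X_[mbin N a1 a2 j + mbin N b1 b2 k].

Lemma mxsymbol_trmx w a1 a2 b1 b2 M :
  mxsymbol w b1 b2 a1 a2 M^T = mxsymbol w a1 a2 b1 b2 M.
Proof.
rewrite /mxsymbol exchange_big; apply: eq_bigr => j _; apply: eq_bigr => k _.
by rewrite mxE addmC mulrC [w k * _]mulrC mulrA.
Qed.

Definition diffmon (a1 a2 b1 b2 : 'I_n) (f : {mpoly R[n]}) (m : 'X_{1..n}) :
    {mpoly R[n]} :=
  'X_a1 ^+ m a1 * 'X_a2 ^+ m a2 * mderivm (U_(a1) *+ m b1 + U_(a2) *+ m b2) f.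

(* [diffop a1 a2 b1 b2 p] is p(x_a, d_a): each x_(b_i) becomes d/dx_(a_i), with
   the derivatives to the right of the multiplication factors. *)
Definition diffop (a1 a2 b1 b2 : 'I_n) (p f : {mpoly R[n]}) : {mpoly R[n]} :=
  linext (diffmon a1 a2 b1 b2 f) p.

Variables (a1 a2 b1 b2 : 'I_n).
Hypothesis vars_uniq : uniq [:: a1; a2; b1; b2].

Let vars_neq :
  [/\ a1 != a2, b1 != b2 & [/\ a1 != b1, a1 != b2, a2 != b1 & a2 != b2]].
Proof.
move: vars_uniq; rewrite /= !inE !negb_or.
by case/and4P => /and3P[-> -> ->] /andP[-> ->] ->.
Qed.

Lemma diffmon_mbin f j k :
  diffmon a1 a2 b1 b2 f (mbin N a1 a2 j + mbin N b1 b2 k) =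
  'X_[mbin N a1 a2 j] * mderivm (mbin N a1 a2 k) f.
Proof.
have [a12 b12 [a1b1 a1b2 a2b1 a2b2]] := vars_neq.
have mD i : (mbin N a1 a2 j + mbin N b1 b2 k)%MM i =
            (mbin N a1 a2 j i + mbin N b1 b2 k i)%N by exact: mnmDE.
rewrite /diffmon !mD mbin_l // mbin_r // mbin_l // mbin_r //.
rewrite (@mbin_out _ _ a1 a2) // (@mbin_out _ _ a1 a2) //.
rewrite (@mbin_out _ _ b1 b2) 1?eq_sym // (@mbin_out _ _ b1 b2) 1?eq_sym //.
by rewrite !addn0 !add0n mpolyX_mbin.
Qed.

Lemma mderivm_mxsymbol w M (k : 'I_N.+1) :
  mderivm (mbin N a1 a2 k) (mxsymbol w a1 a2 b1 b2 M) =
  \sum_(m < N.+1) (w k * M k m * w m * (k`! * (N - k)`!)%:R) *: 'X_[mbin N b1 b2 m].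
Proof.
have [a12 b12 [a1b1 a1b2 a2b1 a2b2]] := vars_neq.
have derivX (l m : 'I_N.+1) :
    mderivm (mbin N a1 a2 k) 'X_[mbin N a1 a2 l + mbin N b1 b2 m] =
    ((l == k) * (k`! * (N - k)`!))%:R *: 'X_[mbin N b1 b2 m] :> {mpoly R[n]}.
  by rewrite mderivm_mbin ?leq_ord // (@mbin_out _ _ b1 b2) // eq_sym.
rewrite /mxsymbol (raddf_sum (mderivm _)) (bigD1 k) //=.
rewrite [X in _ + X]big1 => [|l ne_lk].
  rewrite addr0 (raddf_sum (mderivm _)); apply: eq_bigr => m _.
  by rewrite [LHS]linearZ /= derivX eqxx mul1n scalerA.
rewrite (raddf_sum (mderivm _)) big1 // => m _.
by rewrite [LHS]linearZ /= derivX (negbTE ne_lk) scale0r scaler0.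
Qed.

Lemma mxsymbol_mulmx w D E :
    (forall k : 'I_N.+1, w k ^+ 2 * (k`! * (N - k)`!)%:R = (N`!)%:R) ->
  (N`!)%:R *: mxsymbol w a1 a2 b1 b2 (D *m E) =
  diffop a1 a2 b1 b2 (mxsymbol w a1 a2 b1 b2 D) (mxsymbol w a1 a2 b1 b2 E).
Proof.
move=> w_norm; rewrite {2}/mxsymbol /diffop.
rewrite (raddf_sum (linext _)) scaler_sumr; apply: eq_bigr => j _.
rewrite (raddf_sum (linext _)).
transitivity (\sum_(k < N.+1) \sum_(m < N.+1)
    (w j * D j k * w k * (w k * E k m * w m * (k`! * (N - k)`!)%:R))
      *: 'X_[mbin N a1 a2 j + mbin N b1 b2 m]); last first.
  apply: eq_bigr => k _; rewrite [RHS]linearZ /= linextX diffmon_mbin.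
  rewrite mderivm_mxsymbol mulr_sumr scaler_sumr; apply: eq_bigr => m _.
  by rewrite -scalerAr -mpolyXD scalerA.
rewrite exchange_big scaler_sumr; apply: eq_bigr => m _.
rewrite -scaler_suml scalerA mxE mulr_sumr mulr_suml mulr_sumr; congr (_ *: _).
by apply: eq_bigr => k _; rewrite -(w_norm k); ring.
Qed.

End MatrixSymbols.

Section Majorana.
Variables (R : numClosedFieldType) (N : nat).

Lemma mcoef_norm (k : 'I_N.+1) :
  mcoef R k ^+ 2 * (k`! * (N - k)`!)%:R = (N`!)%:R.
Proof.
rewrite /mcoef exprMn -exprM mulnC exprM sqrrN expr1n expr1n mul1r sqrtCK -natrM.
by rewrite bin_sub ?bin_fact ?leq_ord.
Qed.

Lemma majoranaE (M : 'M[R]_N.+1) :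
  majorana M = mxsymbol (@mcoef R N) vz1 vz2 vZ1 vZ2 M.
Proof.
apply: eq_bigr => j _; apply: eq_bigr => k _.
rewrite /bra_coef /ket_coef !mpolyX_mbin mpolyXD -scalerAl -scalerAr scalerA.
by rewrite -scalerAr scalerA.
Qed.

Lemma majorana_trmxE (M : 'M[R]_N.+1) :
  majorana M = mxsymbol (@mcoef R N) vZ1 vZ2 vz1 vz2 M^T.
Proof. by rewrite mxsymbol_trmx majoranaE. Qed.

Lemma op_zd_diffop (p f : {mpoly R[4]}) : op_zd p f = diffop vz1 vz2 vZ1 vZ2 p f.
Proof.
apply: eq_bigr => m _.
by rewrite /diffmon /dern -!mderivn_iter -mderivmDm addmC.
Qed.

Lemma op_dz_diffop (p f : {mpoly R[4]}) : op_dz p f = diffop vZ1 vZ2 vz1 vz2 p f.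
Proof.
apply: eq_bigr => m _.
by rewrite /diffmon /dern -!mderivn_iter -mderivmDm addmC.
Qed.

End Majorana.

Theorem lemma1 (R : numClosedFieldType) (N : nat) (hN : (0 < N)%N)
    (C D E : 'M[R]_N.+1) :
  C = D *m E ->
  majorana C = (N`!)%:R^-1 *: op_zd (majorana D) (majorana E) /\
  majorana C = (N`!)%:R^-1 *: op_dz (majorana E) (majorana D).
Proof.
move=> ->; have factN_neq0 : (N`!)%:R != 0 :> R by rewrite pnatr_eq0 -lt0n fact_gt0.
have uniq_zZ : uniq [:: vz1; vz2; vZ1; vZ2] by rewrite /= !inE -!val_eqE /= !inordK.
have uniq_Zz : uniq [:: vZ1; vZ2; vz1; vz2] by rewrite -(rot_uniq 2).
split.
- rewrite !majoranaE op_zd_diffop -mxsymbol_mulmx ?scalerA ?mulVf ?scale1r //; exact: mcoef_norm.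
- rewrite !majorana_trmxE trmx_mul op_dz_diffop -mxsymbol_mulmx ?scalerA ?mulVf ?scale1r //; exact: mcoef_norm.
Qed.
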